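(* In the EnSolver setting described in the context (ensemble of $M$ base models, output domain of size $N_{\mathcal{S}}$, threshold $\tau$ with $M(1-\tau)$ a positive integer, and assumptions of independence and (A1)–(A3)), the skip rate of the EnSolver $m$ satisfies $$p\left( m(x) = s_{\text{skip}} \right) > \alpha \sum_{i=0}^{k-1}\binom{M}{i}\beta_{\text{min}}^i (1-\beta_{\text{max}})^{M-i} + (1-\alpha) - \frac{N_{\mathcal{S}}-\alpha}{N_{\mathcal{S}}-1}\, \mathcal{E}(M, N_{\mathcal{S}}, \tau),$$ where $k = M(1-\tau) + 1$ and $x \sim p$.
   Context: Setting: $\mathcal{S}$ is a finite set of output strings with $N_{\mathcal{S}} = |\mathcal{S}| \ge 2$; inputs $x \in \mathcal{X}$ are drawn from a probability distribution $p$ on $\mathcal{X}$, each $x$ having a single correct output $s_x \in \mathcal{S}$. $\mathcal{X}$ is the disjoint union of the in-distribution set $\mathcal{X}^{\text{in}}$ and the out-of-distribution set $\mathcal{X}^{\text{out}}$, and $\alpha = p(x \in \mathcal{X}^{\text{in}})$. An ensemble consists of $M$ base models $m_1, \dots, m_M$, each of which produces a (random) prediction $m_i(x) \in \mathcal{S}$ on input $x$; probabilities are taken jointly over $x \sim p$ and the predictions, and the base models make their predictions independently of each other given the input (in particular conditionally on $x \in \mathcal{X}^{\text{in}}$ and conditionally on $x \in \mathcal{X}^{\text{out}}$). Let $\beta_i = p(m_i(x) = s_x \mid x \in \mathcal{X}^{\text{in}})$, $\beta_{\text{min}} = \min_i \beta_i$, $\beta_{\text{max}} = \max_i \beta_i$.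 Assumptions: (A1) $\beta_{\text{min}} > 1/N_{\mathcal{S}}$; (A2) for each $i$, conditionally on $x \in \mathcal{X}^{\text{in}}$, $m_i(x)$ equals each incorrect string $s \neq s_x$ with probability $(1-\beta_i)/(N_{\mathcal{S}}-1)$; (A3) for each $i$, conditionally on $x \in \mathcal{X}^{\text{out}}$, $m_i(x)$ equals each $s \in \mathcal{S}$ with probability $1/N_{\mathcal{S}}$. For $x$ and $s \in \mathcal{S}$, $n(x,s)$ is the number of base models with $m_i(x) = s$. The threshold $\tau \in (0,1]$ is such that $M(1-\tau)$ is a positive integer. The EnSolver $m$ acts as follows on input $x$: let $p_{\max} = \max_{s} n(x,s)/M$ and uncertainty $u = 1 - p_{\max}$; if $u < \tau$ it outputs a string $y$ maximizing $n(x,\cdot)$, otherwise it outputs a special skip symbol $s_{\text{skip}}$. The out-of-distribution error bound is $\mathcal{E}(M, N_{\mathcal{S}}, \tau) = \binom{M}{\lfloor M/2 \rfloor} (N_{\mathcal{S}})^{-M(1-\tau)}$. *)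

From HB Require Import structures.
From mathcomp Require Import all_boot all_order all_algebra.
From mathcomp Require Import all_classical all_reals all_analysis.
Set Implicit Arguments. Unset Strict Implicit. Unset Printing Implicit Defensive.
Import Order.TTheory GRing.Theory Num.Theory.
Local Open Scope ring_scope.

Section EnSolver.
Variables (R : realType) (S : finType) (M : nat).

(* A vector of base-model predictions: t i = m_i(x). *)
Definition preds := {ffun 'I_M -> S}.

Definition nvotes (t : preds) (s : S) : nat := #|[set i | t i == s]|.

Definition maxvotes (t : preds) : nat := \max_(s : S) nvotes t s.

Definition pmax (t : preds) : R := (maxvotes t)%:R / M%:R.
Definition uncertainty (t : preds) : R := 1 - pmax t.

(* The EnSolver output: Some y (y maximizing n(x,.)) if u < tau,
   None = the skip symbol s_skip otherwise. *)
Definition ensolver (tau : R) (t : preds) : option S :=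
  if uncertainty t < tau then [pick s | nvotes t s == maxvotes t] else None.

(* Conditional probability (given the input x) that the EnSolver skips,
   when base model i predicts according to the conditional pmf q i x,
   independently of the other base models given x. *)
Definition cond_skip_prob (T : Type) (q : 'I_M -> T -> S -> R) (tau : R)
  (x : T) : R :=
  \sum_(t : preds) (\prod_(i < M) q i x (t i)) * (ensolver tau t == None)%:R.

(* Out-of-distribution error bound  E(M, N, tau) = C(M, floor(M/2)) N^{-M(1-tau)},
   where K = M(1-tau) (a positive integer). *)
Definition err_bound (N K : nat) : R := 'C(M, M./2)%:R * (N%:R ^+ K)^-1.

End EnSolver.

From HB Require Import structures.
From mathcomp Require Import all_boot all_order all_algebra.
From mathcomp Require Import all_classical all_reals all_analysis.
From mathcomp Require Import measurable_realfun zify ring lra.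
Set Implicit Arguments. Unset Strict Implicit. Unset Printing Implicit Defensive.
Import Order.TTheory GRing.Theory Num.Theory.
Local Open Scope classical_set_scope.
Local Open Scope ring_scope.

(* Given the input, the base models vote independently, and the EnSolver skips as soon as
   no string gets more than K = M(1 - tau) votes. By the union bound the conditional skip
   probability is at least 1 - sum_s P(n(x,s) > K), and P(n(x,s) > K) <= C(M,K+1) p^(K+1)
   when every model picks s with probability at most p (union over the (K+1)-sets of voters).
   Out of distribution p = 1/N for every s. In distribution the correct string contributes
   P(n(x,s_x) <= K) >= sum_(i <= K) C(M,i) bmin^i (1 - bmax)^(M-i), and each of the N - 1
   wrong strings has p = (1 - beta_i)/(N - 1) <= 1/N by (A1). Averaging the two bounds with
   weights alpha and 1 - alpha, the claim follows from C(M,K+1) <= C(M,floor(M/2)) and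
   1/N < 1/(N - 1), the latter making the inequality strict. *)

Lemma leq_bin_succ n k : (k < n - k)%N -> ('C(n, k) <= 'C(n, k.+1))%N.
Proof.
move=> lt_k_nk; rewrite -(leq_pmul2l (ltn0Sn k)) mul_bin_left.
exact: leq_mul.
Qed.

Lemma leq_bin_half n k : ('C(n, k) <= 'C(n, n./2))%N.
Proof.
have n_halves : (odd n + (n./2 + n./2))%N = n by rewrite addnn odd_double_half.
have bin_half_low j : (j <= n./2)%N -> ('C(n, j) <= 'C(n, n./2))%N.
  move=> le_j_half.
  have : {in [pred i | i <= n./2]%N &, {homo binomial n : i l / i <= l}}%N.
    apply: homo_leq_in => //=; first exact: leq_trans.
    - by move=> i l _ le_l_half m /andP[_ /ltnW /leq_trans]; apply.
    - move=> i _; rewrite inE /= => le_i_half.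
      by apply: leq_bin_succ; lia.
  by apply; rewrite ?inE.
have [/bin_half_low//|lt_half_k] := leqP k n./2.
have [le_kn|/bin_small->//] := leqP k n.
by rewrite -bin_sub //; apply: bin_half_low; lia.
Qed.

Lemma prodr_nat_bool (R : comPzSemiRingType) (I : finType) (b : I -> bool) :
  \prod_i (b i)%:R = [forall i, b i]%:R :> R.
Proof.
case: forallP => [all_b|/existsNP[i /negP/negbTE bi]].
  by apply: big1 => i _; rewrite all_b.
by rewrite (bigD1 i) //= bi mul0r.
Qed.

Lemma sum_mul_eq_indicator (R : pzSemiRingType) (S : finType) (F : S -> R) s :
  \sum_u F u * (u == s)%:R = F s.
Proof. by rewrite (bigD1 s) //= eqxx mulr1 big1 ?addr0 // => u /negbTE->; rewrite mulr0. Qed.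

Lemma prodr_if_in (R : comPzSemiRingType) n (A : {set 'I_n}) (a b : R) :
  \prod_i (if i \in A then a else b) = a ^+ #|A| * b ^+ (n - #|A|).
Proof.
rewrite (bigID (mem A)) /=.
rewrite [X in X * _](eq_bigr (fun=> a)) => [|i ->//].
rewrite [X in _ * X](eq_bigr (fun=> b)) => [|i /negbTE->//].
rewrite !prodr_const; congr (_ * _ ^+ _).
transitivity #|~: A|; first by apply: eq_card => i; rewrite inE.
by have := cardsC A; rewrite card_ord; move: #|~: A| #|A|; lia.
Qed.

Lemma sumr_card_eq (R : pzSemiRingType) n j (x : R) :
  \sum_(A : {set 'I_n} | #|A| == j) x = 'C(n, j)%:R * x.
Proof. by rewrite sumr_const -[n in 'C(n, _)]card_ord -card_draws mulr_natl cardsE. Qed.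

Lemma sumr_card_leq (R : pzSemiRingType) n K (G : nat -> R) :
  \sum_(A : {set 'I_n} | (#|A| <= K)%N) G #|A| = \sum_(j < K.+1) 'C(n, j)%:R * G j.
Proof.
rewrite (partition_big (fun A : {set 'I_n} => inord #|A| : 'I_K.+1) predT) //=.
apply: eq_bigr => j _; rewrite -sumr_card_eq.
transitivity (\sum_(A : {set 'I_n} | #|A| == j) G #|A|); last first.
  by apply: eq_bigr => A /eqP->.
apply: eq_bigl => A; case: (leqP #|A| K) => [le_AK|lt_KA] /=.
  by rewrite -val_eqE /= inordK.
by apply/esym/negbTE; rewrite neq_ltn (leq_trans (ltn_ord j) lt_KA) orbT.
Qed.

Definition voters (S : finType) (M : nat) (t : preds S M) (s : S) : {set 'I_M} :=
  [set i | t i == s].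

Section Votes.
Variables (S : finType) (M : nat).
Implicit Types (t : preds S M) (s : S).

Lemma nvotes_le_sum_voters_eq (R : pzSemiRingType) t s K :
  (nvotes t s <= K)%N%:R = \sum_(A : {set 'I_M} | (#|A| <= K)%N) (voters t s == A)%:R :> R.
Proof.
rewrite big_mkcond (bigD1 (voters t s)) //= eqxx big1 ?addr0 => [|A]; first by case: ifP.
by rewrite eq_sym => /negbTE->; case: ifP.
Qed.

Lemma nvotes_gt_le_sum_subsets (R : numDomainType) t s K :
  (K < nvotes t s)%N%:R <= \sum_(A : {set 'I_M} | #|A| == K.+1) (A \subset voters t s)%:R :> R.
Proof.
have subsets_ge0 (P : pred {set 'I_M}) :
    0 <= \sum_(A | P A) (A \subset voters t s)%:R :> R.
  by apply: sumr_ge0 => A _; rewrite ler0n.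
case: ltnP => // /card_geqP[r [uniq_r size_r sub_r]].
have card_r : #|[set i in r]| == K.+1 by rewrite cardsE (card_uniqP uniq_r) size_r.
have r_sub : [set i in r] \subset voters t s.
  by apply/fintype.subsetP => i; rewrite inE => /sub_r.
by rewrite (bigD1 _ card_r) /= r_sub lerDl.
Qed.

Lemma ensolver_skip (R : realType) (tau : R) K t :
  (0 < K)%N -> M%:R * (1 - tau) = K%:R -> (forall s, nvotes t s <= K)%N ->
  ensolver tau t = None.
Proof.
move=> K_gt0 MK votes_le.
have M_gt0 : (0 < M)%N.
  rewrite lt0n; apply: contraTneq K_gt0 => M0.
  by move: MK; rewrite M0 mul0r => /esym/eqP; rewrite pnatr_eq0 => /eqP->.
have max_le : (maxvotes t <= K)%N by apply/bigmax_leqP => s _; exact: votes_le.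
rewrite /ensolver /uncertainty /pmax ifN // -leNgt lerBrDl -lerBrDr.
by rewrite ler_pdivrMr ?ltr0n // mulrC MK ler_nat.
Qed.

Lemma skip_ge_union (R : realType) (tau : R) K t :
  (0 < K)%N -> M%:R * (1 - tau) = K%:R ->
  1 - \sum_s (K < nvotes t s)%N%:R <= (ensolver tau t == None)%:R :> R.
Proof.
move=> K_gt0 MK.
case: (boolP [forall s, nvotes t s <= K]%N) => [/forallP votes_le|/forallPn[s]].
  by rewrite (ensolver_skip K_gt0 MK votes_le) eqxx lerBlDr lerDl sumr_ge0.
rewrite -ltnNge => lt_K_s; apply: (@le_trans _ _ 0); last by rewrite ler0n.
by rewrite subr_le0 (bigD1 s) //= lt_K_s lerDl sumr_ge0.
Qed.

End Votes.

Lemma pmf_le1 (R : numDomainType) (S : finType) (mu : S -> R) s :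
  (forall u, 0 <= mu u) -> \sum_u mu u = 1 -> mu s <= 1.
Proof.
by move=> mu_ge0 <-; rewrite (bigD1 s) //= lerDl sumr_ge0.
Qed.

Section ProductLaw.
Variables (R : numDomainType) (S : finType) (M : nat) (Q : 'I_M -> S -> R).
Hypotheses (Q_ge0 : forall i u, 0 <= Q i u) (Q_sum1 : forall i, \sum_u Q i u = 1).
Implicit Types (h : preds S M -> R) (A : {set 'I_M}) (s : S).

(* [cond_skip_prob q tau x] is [Eprod (q^~ x) (fun t => (ensolver tau t == None)%:R)]. *)
Definition Eprod h := \sum_(t : preds S M) (\prod_i Q i (t i)) * h t.

Lemma eq_Eprod h1 h2 : (forall t, h1 t = h2 t) -> Eprod h1 = Eprod h2.
Proof. by move=> eq_h; apply: eq_bigr => t _; rewrite eq_h. Qed.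

Lemma Eprod_prod (G : 'I_M -> S -> R) :
  Eprod (fun t => \prod_i G i (t i)) = \prod_i \sum_u Q i u * G i u.
Proof. by rewrite bigA_distr_bigA; apply: eq_bigr => t _; rewrite big_split. Qed.

Lemma Eprod_sum (I : finType) (P : pred I) (h : I -> preds S M -> R) :
  Eprod (fun t => \sum_(j | P j) h j t) = \sum_(j | P j) Eprod (h j).
Proof. by rewrite exchange_big; apply: eq_bigr => t _; rewrite mulr_sumr. Qed.

Lemma EprodB h1 h2 : Eprod (fun t => h1 t - h2 t) = Eprod h1 - Eprod h2.
Proof. by rewrite -sumrB; apply: eq_bigr => t _; rewrite mulrBr. Qed.

Lemma Eprod1 : Eprod (fun=> 1) = 1.
Proof.
transitivity (Eprod (fun t => \prod_(i < M) 1)).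
  by apply: eq_bigr => t _; rewrite prodr_const expr1n.
by rewrite (Eprod_prod (fun _ _ => 1)) big1 // => i _; under eq_bigr do rewrite mulr1.
Qed.

Lemma ler_Eprod h1 h2 : (forall t, h1 t <= h2 t) -> Eprod h1 <= Eprod h2.
Proof.
by move=> le_h; apply: ler_sum => t _; rewrite ler_wpM2l ?prodr_ge0.
Qed.

Lemma Eprod_ge0 h : (forall t, 0 <= h t) -> 0 <= Eprod h.
Proof. by move=> h_ge0; apply: sumr_ge0 => t _; rewrite mulr_ge0 ?prodr_ge0. Qed.

Lemma sum_mul_neq_indicator i s : \sum_u Q i u * (u != s)%:R = 1 - Q i s.
Proof.
rewrite -[in RHS](Q_sum1 i) -[in RHS](sum_mul_eq_indicator (Q i) s) -sumrB.
by apply: eq_bigr => u _; case: eqP; rewrite ?mulr0 ?mulr1 ?subr0 ?subrr.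
Qed.

Lemma Eprod_voters_eq s A :
  Eprod (fun t => (voters t s == A)%:R) = \prod_i (if i \in A then Q i s else 1 - Q i s).
Proof.
have voters_eqE t :
    (voters t s == A) = [forall i, if i \in A then t i == s else t i != s].
  apply/idP/idP => [/eqP<-|/forallP voters_t].
    by apply/forallP => i; rewrite inE; case: eqP.
  by apply/eqP/setP => i; rewrite inE; case: (i \in A) (voters_t i) => [->|/negbTE].
under eq_Eprod => t do rewrite voters_eqE -prodr_nat_bool.
rewrite (Eprod_prod (fun i u => (if i \in A then u == s else u != s)%:R)).
apply: eq_bigr => i _; case: (i \in A).
  exact: sum_mul_eq_indicator.
exact: sum_mul_neq_indicator.
Qed.

Lemma Eprod_subset_voters s A :
  Eprod (fun t => (A \subset voters t s)%:R) = \prod_(i in A) Q i s.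
Proof.
have subset_votersE t :
    (A \subset voters t s) = [forall i, (i \in A) ==> (t i == s)].
  apply/idP/idP => [/fintype.subsetP sub|/forallP sub].
    by apply/forallP => i; apply/implyP => /sub; rewrite inE.
  by apply/fintype.subsetP => i /(implyP (sub i)); rewrite inE.
under eq_Eprod => t do rewrite subset_votersE -prodr_nat_bool.
rewrite (Eprod_prod (fun i u => ((i \in A) ==> (u == s))%:R)).
rewrite [RHS]big_mkcond; apply: eq_bigr => i _; case: (i \in A) => /=.
  exact: sum_mul_eq_indicator.
by under eq_bigr do rewrite mulr1.
Qed.

Lemma Eprod_nvotes_gt s K (p : R) : (forall i, Q i s <= p) ->
  Eprod (fun t => (K < nvotes t s)%N%:R) <= 'C(M, K.+1)%:R * p ^+ K.+1.
Proof.
move=> Qs_le.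
apply: le_trans (ler_Eprod (fun t => nvotes_gt_le_sum_subsets R t s K)) _.
rewrite Eprod_sum -sumr_card_eq; apply: ler_sum => A /eqP <-.
by rewrite Eprod_subset_voters -prodr_const; apply: ler_prod => i _; rewrite Q_ge0 Qs_le.
Qed.

Lemma Eprod_nvotes_le s K (bmin bmax : R) :
  0 <= bmin -> bmax <= 1 -> (forall i, bmin <= Q i s <= bmax) ->
  \sum_(j < K.+1) 'C(M, j)%:R * bmin ^+ j * (1 - bmax) ^+ (M - j)
    <= Eprod (fun t => (nvotes t s <= K)%N%:R).
Proof.
move=> bmin_ge0 bmax_le1 Qs_bounds.
under eq_bigr do rewrite -mulrA.
rewrite -(sumr_card_leq M K (fun j => bmin ^+ j * (1 - bmax) ^+ (M - j))).
under eq_Eprod => t do rewrite (nvotes_le_sum_voters_eq R).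
rewrite Eprod_sum; apply: ler_sum => A _.
rewrite Eprod_voters_eq -prodr_if_in; apply: ler_prod => i _.
have /andP[bmin_le bmax_ge] := Qs_bounds i.
by case: ifP => _; rewrite ?bmin_ge0 ?subr_ge0 ?bmax_le1 ?lerB.
Qed.

End ProductLaw.

Section SkipProbability.
Variables (R : realType) (S : finType) (M : nat) (Q : 'I_M -> S -> R).
Hypotheses (Q_ge0 : forall i u, 0 <= Q i u) (Q_sum1 : forall i, \sum_u Q i u = 1).

Lemma Eprod_skip_ge (tau : R) K : (0 < K)%N -> M%:R * (1 - tau) = K%:R ->
  1 - \sum_s Eprod Q (fun t => (K < nvotes t s)%N%:R)
    <= Eprod Q (fun t => (ensolver tau t == None)%:R).
Proof.
move=> K_gt0 MK; rewrite -Eprod_sum -[X in X - _](Eprod1 Q_sum1) -EprodB.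
by apply: (ler_Eprod Q_ge0) => t; apply: skip_ge_union.
Qed.

Lemma Eprod_skip_uniform (tau : R) K : (0 < K)%N -> M%:R * (1 - tau) = K%:R ->
  (forall i u, Q i u = #|S|%:R^-1) ->
  1 - #|S|%:R * ('C(M, K.+1)%:R * #|S|%:R^-1 ^+ K.+1)
    <= Eprod Q (fun t => (ensolver tau t == None)%:R).
Proof.
move=> K_gt0 MK Q_unif; apply: le_trans (Eprod_skip_ge K_gt0 MK).
apply: lerB => //; rewrite [leRHS]mulr_natl -sumr_const; apply: ler_sum => s _.
by apply: (Eprod_nvotes_gt Q_ge0 Q_sum1) => i; rewrite Q_unif.
Qed.

Lemma Eprod_skip_peaked (tau : R) K s0 (bmin bmax p : R) :
  (0 < K)%N -> M%:R * (1 - tau) = K%:R ->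
  0 <= bmin -> bmax <= 1 -> (forall i, bmin <= Q i s0 <= bmax) ->
  (forall i s, s != s0 -> Q i s <= p) ->
  \sum_(j < K.+1) 'C(M, j)%:R * bmin ^+ j * (1 - bmax) ^+ (M - j)
      - (#|S|%:R - 1) * ('C(M, K.+1)%:R * p ^+ K.+1)
    <= Eprod Q (fun t => (ensolver tau t == None)%:R).
Proof.
move=> K_gt0 MK bmin_ge0 bmax_le1 Qs0_bounds Q_le.
apply: le_trans (Eprod_skip_ge K_gt0 MK).
rewrite (bigD1 s0) //= opprD addrA; apply: lerB.
  rewrite -[X in _ <= X - _](Eprod1 Q_sum1) -EprodB.
  apply: le_trans (Eprod_nvotes_le Q_sum1 K bmin_ge0 bmax_le1 Qs0_bounds) _.
  by apply: (ler_Eprod Q_ge0) => t; rewrite ltnNge; case: leqP; rewrite ?subrr ?subr0.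
have S_gt0 : (0 < #|S|)%N by apply/card_gt0P; exists s0.
rewrite -(prednK S_gt0) -natr1 addrK -(cardC1 s0) [leRHS]mulr_natl -sumr_const.
by apply: ler_sum => s s_ne; apply: (Eprod_nvotes_gt Q_ge0 Q_sum1) => i; apply: Q_le.
Qed.

End SkipProbability.

Lemma residual_share_le_inv (R : realFieldType) (N b : R) :
  1 < N -> N^-1 <= b -> (1 - b) / (N - 1) <= N^-1.
Proof.
move=> N_gt1 b_ge; have N_neq0 : N != 0 by rewrite gt_eqF // (lt_trans ltr01).
rewrite ler_pdivrMr ?subr_gt0 // mulrBr mulr1 mulVf //.
by rewrite lerD2l lerN2.
Qed.

Lemma binomial_tail_lt_err_bound (R : realType) M N K : (1 < N)%N ->
  'C(M, K.+1)%:R * N%:R^-1 ^+ K.+1 < err_bound R M N K / (N%:R - 1).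
Proof.
move=> N_gt1; have N_gt0 : (0 < N)%N by rewrite (ltn_trans _ N_gt1).
have z_gt0 : 0 < (N%:R ^+ K)^-1 :> R by rewrite invr_gt0 exprn_gt0 ?ltr0n.
rewrite exprSr exprVn mulrA /err_bound.
apply: (@le_lt_trans _ _ ('C(M, M./2)%:R * (N%:R ^+ K)^-1 * N%:R^-1)).
  by rewrite ler_pM2r ?invr_gt0 ?ltr0n // ler_pM2r // ler_nat leq_bin_half.
rewrite ltr_pM2l ?mulr_gt0 ?ltr0n ?bin_gt0 -?divn2 ?leq_div // ltf_pV2 ?posrE ?ltr0n //.
  by rewrite ltrBlDr ltrDl.
by rewrite subr_gt0 ltr1n.
Qed.

Lemma mixture_bound_lt (R : realFieldType) (N alpha L D E : R) :
  1 < N -> alpha <= 1 -> D < E / (N - 1) ->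
  alpha * L + (1 - alpha) - (N - alpha) / (N - 1) * E
    < (L - (N - 1) * D) * alpha + (1 - N * D) * (1 - alpha).
Proof.
move=> N_gt1 alpha_le1 D_lt; rewrite -subr_gt0.
have -> : (L - (N - 1) * D) * alpha + (1 - N * D) * (1 - alpha)
    - (alpha * L + (1 - alpha) - (N - alpha) / (N - 1) * E)
    = (N - alpha) * (E / (N - 1) - D) by ring.
by rewrite mulr_gt0 ?subr_gt0 // (le_lt_trans alpha_le1).
Qed.

Section SkipIntegral.
Context d (X : measurableType d) (R : realType).
Local Open Scope ereal_scope.

Lemma ge0_integral_ge_cst (mu : {measure set X -> \bar R}) (D : set X) (f : X -> R) (c : R) :
  measurable D -> measurable_fun D f -> (0 <= c)%R -> (forall x, D x -> c <= f x)%R ->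
  c%:E * mu D <= \int[mu]_(x in D) (f x)%:E.
Proof.
move=> mD mf c_ge0 c_le.
rewrite -integral_cst //; apply: ge0_le_integral => //.
exact/measurable_EFinP.
Qed.

Lemma fine_probability_itv (P : probability X R) (A : set X) :
  measurable A -> (0 <= fine (P A) <= 1)%R.
Proof.
move=> mA; rewrite -lee_fin -[X in _ && X]lee_fin fineK ?fin_num_measure //.
by rewrite measure_ge0 probability_le1.
Qed.

Lemma integral_ge_split (P : probability X R) (A : set X) (f : X -> R) (a b : R) :
  measurable A -> measurable_fun setT f -> (forall x, 0 <= f x)%R ->
  (forall x, A x -> a <= f x)%R -> (forall x, ~ A x -> b <= f x)%R ->
  ((a * fine (P A) + b * (1 - fine (P A)))%:E <= \int[P]_x (f x)%:E).
Proof.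
move=> mA mf f_ge0 a_le b_le.
have /andP[PA_ge0 PA_le1] := fine_probability_itv P mA.
set alpha := fine (P A) in PA_ge0 PA_le1 *.
have PAE : P A = alpha%:E by rewrite fineK ?fin_num_measure.
have PCE : P (~` A) = (1 - alpha)%:E by rewrite probability_setC // PAE.
rewrite -(setUv A) ge0_integral_setU ?setUv //=; first last.
- by apply/disj_set2P; rewrite setICr.
- by move=> x _; rewrite lee_fin.
- exact/measurable_EFinP.
- exact: measurableC.
(* [a] and [b] may be negative, hence the comparison through their positive parts. *)
have maxa_ge0 : (0 <= Num.max a 0)%R by rewrite le_max lexx orbT.
have maxb_ge0 : (0 <= Num.max b 0)%R by rewrite le_max lexx orbT.
have mfA := measurable_funS measurableT (subsetT A) mf.
have mfAC := measurable_funS measurableT (subsetT (~` A)) mf.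
apply: le_trans (leeD (ge0_integral_ge_cst P mA mfA maxa_ge0 _)
                      (ge0_integral_ge_cst P (measurableC mA) mfAC maxb_ge0 _)); first last.
- by move=> x xA; rewrite ge_max b_le ?f_ge0.
- by move=> x xA; rewrite ge_max a_le ?f_ge0.
have -> : (Num.max a 0)%:E * P A + (Num.max b 0)%:E * P (~` A) =
    (Num.max a 0 * alpha + Num.max b 0 * (1 - alpha))%:E by rewrite PAE PCE.
by rewrite lee_fin; apply: lerD; apply: ler_wpM2r; rewrite ?subr_ge0 ?le_max ?lexx.
Qed.

Lemma measurable_cond_skip_prob (S : finType) M (q : 'I_M -> X -> S -> R) (tau : R) :
  (forall i s, measurable_fun setT (fun x => q i x s)) ->
  measurable_fun setT (cond_skip_prob q tau).
Proof.
move=> mq; apply: measurable_sum => t; apply: measurable_funM; last exact: measurable_cst.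
by apply: measurable_prod => i _; apply: mq.
Qed.

End SkipIntegral.

Theorem lemma4 (R : realType) (S : finType) (M : nat)
  (d : measure_display) (X : measurableType d) (P : probability X R)
  (Xin : set X) (sx : X -> S) (q : 'I_M -> X -> S -> R)
  (beta : 'I_M -> R) (bmin bmax tau : R) (K : nat) :
  (* finite output domain with N_S >= 2 *)
  (2 <= #|S|)%N ->
  (* in-distribution set is an event; s_x and the predictions are measurable in x *)
  measurable Xin ->
  (forall s : S, measurable (sx @^-1` [set s])) ->
  (forall (i : 'I_M) (s : S), measurable_fun setT (fun x => q i x s)) ->
  (* q i x is the law of m_i(x) given the input x *)
  (forall i x s, 0 <= q i x s) ->
  (forall i x, \sum_(s : S) q i x s = 1) ->
  (* beta_i = p(m_i(x) = s_x | x in X^in) *)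
  (forall i x, Xin x -> q i x (sx x) = beta i) ->
  (* beta_min, beta_max *)
  (forall i, bmin <= beta i) -> (exists i, beta i = bmin) ->
  (forall i, beta i <= bmax) -> (exists i, beta i = bmax) ->
  (* (A1) *)
  bmin > 1 / #|S|%:R ->
  (* (A2) *)
  (forall i x s, Xin x -> s != sx x -> q i x s = (1 - beta i) / (#|S|%:R - 1)) ->
  (* (A3) *)
  (forall i x s, ~ Xin x -> q i x s = 1 / #|S|%:R) ->
  (* threshold: tau in (0,1], M(1-tau) = K a positive integer *)
  0 < tau -> tau <= 1 -> (0 < K)%N -> M%:R * (1 - tau) = K%:R ->
  let alpha := fine (P Xin) in
  let N := #|S| in
  let k := K.+1 in
  ((alpha * \sum_(i < k) 'C(M, i)%:R * bmin ^+ i * (1 - bmax) ^+ (M - i)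
     + (1 - alpha)
     - (N%:R - alpha) / (N%:R - 1) * err_bound R M N K)%:E
   < \int[P]_x (cond_skip_prob q tau x)%:E)%E.
Proof.
move=> N_ge2 mXin _ mq q_ge0 q_sum1 q_in bmin_le _ bmax_ge [imax beta_imax] A1 A2 A3
  _ _ K_gt0 MK; cbv zeta.
set N := #|S|.
have N_gt1 : (1 < N)%N by [].
have N_gt1R : 1 < N%:R :> R by rewrite ltr1n.
rewrite div1r in A1.
set L := \sum_(i < K.+1) _.
pose D : R := 'C(M, K.+1)%:R * N%:R^-1 ^+ K.+1.
have skip_in x : Xin x -> L - (N%:R - 1) * D <= cond_skip_prob q tau x.
  move=> x_in.
  apply: (Eprod_skip_peaked (q_ge0 ^~ x) (q_sum1 ^~ x) (s0 := sx x) K_gt0 MK) => //.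
  - by apply: le_trans (ltW A1); rewrite invr_ge0.
  - by rewrite -beta_imax -(q_in _ _ x_in) pmf_le1.
  - by move=> i; rewrite q_in // bmin_le bmax_ge.
  - move=> i s s_ne; rewrite A2 //; apply: residual_share_le_inv => //.
    by rewrite (le_trans (ltW A1)).
have skip_out x : ~ Xin x -> 1 - N%:R * D <= cond_skip_prob q tau x.
  move=> x_out; apply: (Eprod_skip_uniform (q_ge0 ^~ x) (q_sum1 ^~ x) K_gt0 MK).
  by move=> i u; rewrite A3 // div1r.
have skip_ge0 x : 0 <= cond_skip_prob q tau x.
  by apply: (Eprod_ge0 (q_ge0 ^~ x)) => t; rewrite ler0n.
apply: lt_le_trans (integral_ge_split P mXin (measurable_cond_skip_prob tau mq)
  skip_ge0 skip_in skip_out).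
have /andP[_ alpha_le1] := fine_probability_itv P mXin.
rewrite lte_fin; exact: mixture_bound_lt (binomial_tail_lt_err_bound R M K N_gt1).
Qed.
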